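(* For every $d\ge1$, the simplex $S_d=\mathrm{conv}\{-\mathbf{1},e_1,\dots,e_d\}\subset\mathbb{R}^d$, where $\mathbf{1}=e_1+\dots+e_d$ is the all-ones vector and $e_i$ are the standard basis vectors, is simultaneously lattice reduced and lattice complete with respect to $\mathbb{Z}^d$.
   Context: For a lattice $\Gamma\subset\mathbb{R}^d$ with dual $\Gamma^\star=\{y:x\cdot y\in\mathbb{Z}\ \forall x\in\Gamma\}$ (for $\Gamma=\mathbb{Z}^d$, $\Gamma^\star=\mathbb{Z}^d$) and a convex body $K$: $\mathrm{wdt}_\Gamma(K)=\min_{y\in\Gamma^\star\setminus\{0\}}\max_{a,b\in K}y\cdot(a-b)$; a segment $[a,b]$ is a lattice segment if $b-a$ is parallel to a nonzero vector of $\Gamma$, with lattice length $|b-a|/|v|$ where $v$ generates $\Gamma\cap\mathrm{span}\{b-a\}$ and is a positive multiple of $b-a$; $\mathrm{diam}_\Gamma(K)$ is the maximum lattice length of a lattice segment in $K$. $K$ is lattice reduced if no convex body $K'\subsetneq K$ has the same lattice width, and lattice complete if no convex body $K'\supsetneq K$ has the same lattice diameter. *)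

From HB Require Import structures.
From mathcomp Require Import all_boot all_order all_algebra.
From mathcomp Require Import all_classical all_reals all_analysis.
Set Implicit Arguments. Unset Strict Implicit. Unset Printing Implicit Defensive.
Import Order.TTheory GRing.Theory Num.Theory.
Import numFieldNormedType.Exports.
Local Open Scope classical_set_scope.
Local Open Scope ring_scope.

Section LatticeDefs.
Variables (R : realType) (d : nat).
Notation V := 'rV[R]_d.

Definition dotv (x y : V) : R := \sum_(i < d) x 0 i * y 0 i.

(* points of the lattice Z^d (which is also its own dual lattice) *)
Definition intv (v : V) : Prop := forall i, v 0 i \is a Num.int.

Definition convex_set_ (K : set V) : Prop :=
  forall a b t, K a -> K b -> 0 <= t -> t <= 1 -> K ((1 - t) *: a + t *: b).
Definition convex_body (K : set V) : Prop :=
  convex_set_ K /\ compact K /\ interior K !=set0.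

Definition width_dir (K : set V) (y : V) : R :=
  sup [set dotv y (a - b) | a in K & b in K].

Definition lattice_width (K : set V) : R :=
  inf [set width_dir K y | y in [set y | intv y /\ y != 0]].

(* v is a nonzero lattice vector generating Z^d ∩ span{v} *)
Definition primitive (v : V) : Prop :=
  intv v /\ v != 0 /\ (forall (s : R), intv (s *: v) -> s \is a Num.int).

Definition lattice_seg_len (a b : V) (t : R) : Prop :=
  0 <= t /\ exists v, primitive v /\ b - a = t *: v.

(* diam_{Z^d}(K) = max lattice length of a lattice segment [a,b] ⊂ K
   (for convex K, [a,b] ⊂ K iff a, b ∈ K) *)
Definition lattice_diam (K : set V) : R :=
  sup [set t | exists a b, K a /\ K b /\ lattice_seg_len a b t].

Definition lattice_reduced (K : set V) : Prop :=
  forall K' : set V, convex_body K' -> K' `<` K ->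
    lattice_width K' <> lattice_width K.

Definition lattice_complete (K : set V) : Prop :=
  forall K' : set V, convex_body K' -> K `<` K' ->
    lattice_diam K' <> lattice_diam K.

Definition conv_pts (n : nat) (p : 'I_n -> V) : set V :=
  [set x | exists l : 'I_n -> R, (forall j, 0 <= l j) /\
     \sum_(j < n) l j = 1 /\ x = \sum_(j < n) l j *: p j].

(* vertices of S_d: vertex 0 is -1 = -(e_1+...+e_d), vertex i+1 is e_{i+1} *)
Definition simplex_vertex (j : 'I_d.+1) : V :=
  if unlift ord0 j is Some i then delta_mx 0 i else - const_mx 1.

Definition simplex_S : set V := conv_pts simplex_vertex.

End LatticeDefs.

From HB Require Import structures.
From mathcomp Require Import all_boot all_order all_algebra.
From mathcomp Require Import all_classical all_reals all_analysis.
From mathcomp Require Import ring lra.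
Set Implicit Arguments. Unset Strict Implicit. Unset Printing Implicit Defensive.
Import Order.TTheory GRing.Theory Num.Theory.
Import numFieldNormedType.Exports.
Local Open Scope classical_set_scope.
Local Open Scope ring_scope.

(* Use barycentric coordinates [bary x j] with respect to the vertices of S_d:
   S_d is the set where all of them are nonnegative, they sum to 1, and moving
   x by t v changes them by t times the vector (0, v) centred to mean zero.

   Reduced: for integral y != 0 the values y . vertex_j are integers summing to
   0, not all zero, so S_d has lattice width at least 2.  A compact convex body
   strictly inside S_d misses a vertex j; some integral functional equals
   bary_j - bary_j', and on the body its maximum, attained by compactness,
   is < 1 while its minimum is >= -1.

   Complete: if a, b in S_d and b - a = t v with v integral, sum the coordinate
   increments over the set J where u = (0, v) is maximal: this gives
   t |J| |J^c| / (d+1) <= 1 with |J| |J^c| >= d, so lattice segments in S_d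
   have length at most (d+1)/d, attained from the centroid of a facet to the
   opposite vertex.  A convex body containing S_d and a point beyond the facet
   opposite vertex j contains c * vertex_j for some c < -1/d, hence a longer
   lattice segment towards vertex_j. *)

Section FiniteFamilies.
Variable R : archiRealFieldType.

Lemma card_support_le_sum_int (I : finType) (w : I -> R) :
  (forall i, 0 <= w i) -> (forall i, w i \is a Num.int) ->
  #|[pred i | w i != 0]|%:R <= \sum_i w i.
Proof.
move=> w_ge0 w_int; rewrite -sum1_card natr_sum.
rewrite [leRHS](bigID (fun i => w i != 0)) /= -[leLHS]addr0 lerD ?sumr_ge0 //.
apply: ler_sum => i wi0.
by have := norm_intr_ge1 (w_int i) wi0; rewrite ger0_norm.
Qed.

Lemma exists_pos_of_sum0 (I : finType) (w : I -> R) k :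
  \sum_i w i = 0 -> w k != 0 -> exists i, 0 < w i.
Proof.
move=> w_sum0 wk0; apply/existsP; apply: contraNT wk0 => /existsPn w_le0.
have w_ge0 i : 0 <= - w i by rewrite oppr_ge0 leNgt w_le0.
have : \sum_i - w i = 0 by rewrite sumrN w_sum0 oppr0.
by move=> /(psumr_eq0P (fun i _ => w_ge0 i))/(_ k isT)/eqP; rewrite oppr_eq0.
Qed.

Lemma int_sum0_spread (I : finType) (w : I -> R) k :
  (forall i, w i \is a Num.int) -> \sum_i w i = 0 -> w k != 0 ->
  exists i1 i2, 2 <= w i1 - w i2.
Proof.
move=> w_int w_sum0 wk0.
have [i1 w1_gt0] := exists_pos_of_sum0 w_sum0 wk0.
have [i2] : exists i, 0 < - w i.
  apply: (exists_pos_of_sum0 (k := k)).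
    by rewrite sumrN w_sum0 oppr0.
  by rewrite oppr_eq0.
rewrite oppr_gt0 => w2_lt0; exists i1, i2.
have := norm_intr_ge1 (w_int i1) (lt0r_neq0 w1_gt0).
have := norm_intr_ge1 (w_int i2) (ltr0_neq0 w2_lt0).
rewrite ltr0_norm // gtr0_norm //; lra.
Qed.

Definition center n (u : 'I_n.+1 -> R) (j : 'I_n.+1) : R :=
  u j - (\sum_k u k) / n.+1%:R.

Lemma sum_center n (u : 'I_n.+1 -> R) : \sum_j center u j = 0.
Proof.
rewrite sumrB sumr_const card_ord -[X in _ - X]mulr_natr.
by rewrite divfK ?pnatr_eq0 ?subrr.
Qed.

Lemma prob_shift_int_le n (a b u : 'I_n.+1 -> R) t k k' :
  (forall j, 0 <= a j) -> (forall j, 0 <= b j) -> \sum_j b j = 1 ->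
  (forall j, u j \is a Num.int) -> u k != u k' -> 0 <= t ->
  (forall j, b j - a j = t * center u j) -> t * n%:R <= n.+1%:R.
Proof.
move=> a_ge0 b_ge0 b_sum1 u_int ukk' t_ge0 ba.
have [m _ m_max] := @arg_maxP _ R _ ord0 xpredT u isT.
pose J := [pred j | u j == u m].
have sumJ : #|J|%:R * (t * center u m) <= 1.
  have -> : #|J|%:R * (t * center u m) = \sum_(j in J) (b j - a j).
    rewrite mulr_natl -sumr_const; apply: eq_bigr => j /eqP Jj.
    by rewrite ba /center Jj.
  rewrite -b_sum1 [leRHS](bigID J) /= -[leLHS]addr0 lerD ?sumr_ge0 //.
  by apply: ler_sum => j _; rewrite gerBl.
have gap : #|[predC J]|%:R <= n.+1%:R * center u m.
  have -> : n.+1%:R * center u m = \sum_j (u m - u j).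
    rewrite sumrB sumr_const card_ord /center mulrBr mulr_natl mulrC.
    by rewrite divfK // pnatr_eq0.
  rewrite (eq_card (B := [pred j | u m - u j != 0])); last first.
    by move=> j; rewrite !inE subr_eq0 eq_sym.
  apply: card_support_le_sum_int => j; first by rewrite subr_ge0; exact: m_max.
  by rewrite rpredB.
have J_gt0 : (1 <= #|J|)%N by apply/card_gt0P; exists m; rewrite inE.
have CJ_gt0 : (1 <= #|[predC J]|)%N.
  apply/card_gt0P; case: (eqVneq (u k) (u m)) => [ukm|]; last by exists k.
  by exists k'; rewrite !inE -ukm eq_sym.
have card_split : #|J|%:R + #|[predC J]|%:R = n%:R + 1 :> R.
  by rewrite -natrD cardC card_ord natr1.
move: J_gt0 CJ_gt0 sumJ gap card_split; rewrite -!(ler_nat R) -!natr1.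
set x := #|J|%:R; set y := #|[predC J]|%:R => x_ge1 y_ge1 sumJ gap xy.
have xy_ge : n%:R <= x * y by nra.
have : t * (x * y) <= t * (x * ((n%:R + 1) * center u m)).
  by apply: ler_wpM2l => //; apply: ler_wpM2l => //; lra.
nra.
Qed.

Lemma exists_small_scale (I : finType) (x : I -> R) e :
  0 < e -> exists l, [/\ 0 < l, l < 1 & forall k, l * x k <= e].
Proof.
move=> e_gt0; set B := \sum_k `|x k|.
have B_ge0 : 0 <= B by apply: sumr_ge0.
have den_gt0 : 0 < 1 + e + B by lra.
exists (e / (1 + e + B)); split; first exact: divr_gt0.
  by rewrite ltr_pdivrMr // mul1r; lra.
move=> k; have xk_le : x k <= B.
  by rewrite (le_trans (ler_norm _)) // /B (bigD1 k) //= lerDl sumr_ge0.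
by rewrite mulrAC ler_pdivrMr // ler_pM2l //; lra.
Qed.

End FiniteFamilies.

Lemma rV_neq0_entry (R : nmodType) n (v : 'rV[R]_n) :
  v != 0 -> exists i, v 0 i != 0.
Proof.
move=> v_neq0; apply/existsP; apply: contraNT v_neq0 => /existsPn v0.
by apply/eqP/rowP => i; rewrite mxE; apply/eqP/negbNE/v0.
Qed.

Lemma conv_pts_sub (R : realType) d (K : set 'rV[R]_d) n
    (p : 'I_n -> 'rV[R]_d) :
  convex_set_ K -> (forall j, K (p j)) -> conv_pts p `<=` K.
Proof.
move=> K_cvx; elim: n p => [|n IHn] p Kp x [l [l_ge0 [l_sum1 ->]]].
  by move: l_sum1; rewrite big_ord0 => /eqP; rewrite eq_sym oner_eq0.
rewrite big_ord_recr /=; rewrite big_ord_recr /= in l_sum1.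
set w := fun i : 'I_n => widen_ord (leqnSn n) i.
set L := \sum_(i < n) l (w i) in l_sum1 *.
have L_ge0 : 0 <= L by apply: sumr_ge0 => i _.
have [L0|L_neq0] := eqVneq L 0.
  have l0 := psumr_eq0P (fun i _ => l_ge0 (w i)) L0.
  rewrite big1 ?add0r => [|i _]; last by rewrite l0 ?scale0r.
  by rewrite L0 add0r in l_sum1; rewrite l_sum1 scale1r.
have K_rest : K (\sum_(i < n) (l (w i) / L) *: p (w i)).
  apply: (IHn (p \o w)) => [i|]; first exact: Kp.
  exists (fun i => l (w i) / L); split.
    by move=> i; rewrite divr_ge0.
  by split => //; rewrite -mulr_suml mulfV.
have -> : \sum_(i < n) l (w i) *: p (w i) =
    (1 - l ord_max) *: \sum_(i < n) (l (w i) / L) *: p (w i).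
  rewrite -l_sum1 addrK scaler_sumr; apply: eq_bigr => i _.
  by rewrite scalerA mulrC divfK.
apply: K_cvx => //; rewrite -l_sum1 lerDr //.
Qed.

Section Barycentric.
Variables (R : realType) (d : nat).
Notation V := 'rV[R]_d.
Notation vertex := (@simplex_vertex R d).
Notation S := (@simplex_S R d).

Definition pad0 (x : V) (j : 'I_d.+1) : R :=
  if unlift ord0 j is Some i then x 0 i else 0.

Definition bary (x : V) (j : 'I_d.+1) : R := center (pad0 x) j + d.+1%:R^-1.

Lemma pad0_ord0 x : pad0 x ord0 = 0.
Proof. by rewrite /pad0 unlift_none. Qed.

Lemma pad0_lift x i : pad0 x (lift ord0 i) = x 0 i.
Proof. by rewrite /pad0 liftK. Qed.

Lemma bary_sum x : \sum_j bary x j = 1.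
Proof.
rewrite big_split /= sum_center add0r sumr_const card_ord -[LHS]mulr_natr.
by rewrite mulVf ?pnatr_eq0.
Qed.

Lemma bary_translate (a v : V) t j :
  bary (a + t *: v) j = bary a j + t * center (pad0 v) j.
Proof.
have pad0_translate k : pad0 (a + t *: v) k = pad0 a k + t * pad0 v k.
  by rewrite /pad0; case: unlift => [i|]; rewrite ?mxE ?mulr0 ?addr0.
rewrite /bary /center; under eq_bigr do rewrite pad0_translate.
by rewrite big_split /= -mulr_sumr pad0_translate; ring.
Qed.

Lemma bary_affine (a b : V) t j :
  bary ((1 - t) *: a + t *: b) j = (1 - t) * bary a j + t * bary b j.
Proof.
have -> : (1 - t) *: a + t *: b = a + t *: (b - a).
  by rewrite scalerBl scale1r scalerBr addrA addrAC.
have := bary_translate a (b - a) 1 j.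
rewrite scale1r addrC subrK mul1r bary_translate => ->; ring.
Qed.

Lemma vertex_combination_entry (l : 'I_d.+1 -> R) k :
  (\sum_j l j *: vertex j) 0 k = l (lift ord0 k) - l ord0.
Proof.
rewrite summxE big_ord_recl addrC /simplex_vertex unlift_none !mxE mulrN1.
congr (_ - _); under eq_bigr do rewrite liftK !mxE.
rewrite (bigD1 k) //= eqxx mulr1 big1 ?addr0 // => i ik.
by rewrite eq_sym (negPf ik) mulr0.
Qed.

Lemma bary_vertex_combination (l : 'I_d.+1 -> R) :
  \sum_j l j = 1 -> bary (\sum_j l j *: vertex j) =1 l.
Proof.
move=> l_sum1; set x := \sum_j l j *: vertex j.
have pad0_comb j : pad0 x j = l j - l ord0.
  case: (unliftP ord0 j) => [i ->|->]; last by rewrite pad0_ord0 subrr.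
  by rewrite pad0_lift vertex_combination_entry.
move=> j; rewrite /bary /center; under eq_bigr do rewrite pad0_comb.
rewrite pad0_comb sumrB l_sum1 sumr_const card_ord -[l ord0 *+ _]mulr_natr.
by field; rewrite addrC natr1 pnatr_eq0.
Qed.

Lemma bary_decomposition x : x = \sum_j bary x j *: vertex j.
Proof.
apply/rowP => k; rewrite vertex_combination_entry /bary /center.
by rewrite pad0_lift pad0_ord0; ring.
Qed.

Lemma simplexE x : S x <-> forall j, 0 <= bary x j.
Proof.
split => [[l [l_ge0 [l_sum1 ->]]] j|bary_ge0].
  by rewrite bary_vertex_combination.
exists (bary x); split => //.
by split; [exact: bary_sum | exact: bary_decomposition].
Qed.

Lemma bary_vertex j k : bary (vertex j) k = (k == j)%:R.
Proof.
have vertexE : vertex j = \sum_i (i == j)%:R *: vertex i.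
  rewrite (bigD1 j) //= eqxx scale1r big1 ?addr0 // => i /negPf ->.
  by rewrite scale0r.
rewrite [in LHS]vertexE bary_vertex_combination //.
by rewrite (bigD1 j) //= eqxx big1 ?addr0 // => i /negPf ->.
Qed.

Lemma vertex_in_simplex j : S (vertex j).
Proof. by apply/simplexE => k; rewrite bary_vertex ler0n. Qed.

Lemma bary_le1 x j : S x -> bary x j <= 1.
Proof.
move=> /simplexE bary_ge0; rewrite -(bary_sum x) (bigD1 j) //= lerDl.
exact: sumr_ge0.
Qed.

Lemma bary_eq1 x j : S x -> bary x j = 1 -> x = vertex j.
Proof.
move=> /simplexE bary_ge0 xj1.
have : \sum_(k | k != j) bary x k = 0.
  by have := bary_sum x; rewrite (bigD1 j) //= xj1; lra.
move=> /(psumr_eq0P (fun k _ => bary_ge0 k)) others0.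
rewrite [LHS]bary_decomposition (bigD1 j) //= xj1 scale1r big1 ?addr0 //.
by move=> k /others0 ->; rewrite scale0r.
Qed.

Lemma bary0 k : bary 0 k = d.+1%:R^-1.
Proof.
have pad00 j : pad0 0 j = 0.
  by rewrite /pad0; case: unlift => [?|]; rewrite ?mxE.
by rewrite /bary /center pad00 big1 // mul0r subrr add0r.
Qed.

Lemma bary_scale_vertex c j k :
  bary (c *: vertex j) k = (1 - c) / d.+1%:R + c * (k == j)%:R.
Proof.
rewrite -[c *: _]add0r -[0 : V](scaler0 _ (1 - c)) bary_affine.
by rewrite bary0 bary_vertex mulrC.
Qed.

Lemma bary_liftB x i : bary x (lift ord0 i) - bary x ord0 = x 0 i.
Proof. by rewrite /bary /center pad0_lift pad0_ord0; ring. Qed.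

Lemma simplex_entry_bound x i : S x -> `|x 0 i| <= 1.
Proof.
move=> Sx; have /simplexE bary_ge0 := Sx; rewrite -bary_liftB.
have := bary_le1 (lift ord0 i) Sx; have := bary_le1 ord0 Sx.
have := bary_ge0 (lift ord0 i); have := bary_ge0 ord0.
rewrite ler_norml; move=> *; apply/andP; split; lra.
Qed.

Lemma simplex_preimage (p q : V) l :
  0 <= l -> l < 1 -> (forall k, l * bary p k <= bary q k) ->
  exists2 s, S s & q = (1 - l) *: s + l *: p.
Proof.
move=> l_ge0 l_lt1 pq; have l1_gt0 : 0 < 1 - l by rewrite subr_gt0.
have l1_neq0 := lt0r_neq0 l1_gt0.
exists ((1 - l)^-1 *: (q - l *: p)).
  2: by rewrite scalerA mulfV // scale1r subrK.
apply/simplexE => k; rewrite -(pmulr_rge0 _ l1_gt0).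
have := bary_affine ((1 - l)^-1 *: (q - l *: p)) p l k.
rewrite scalerA mulfV // scale1r subrK => /eqP; rewrite -subr_eq => /eqP <-.
by rewrite subr_ge0.
Qed.

End Barycentric.

Section LatticeWidth.
Variables (R : realType) (d : nat).
Hypothesis d_gt0 : (0 < d)%N.
Notation V := 'rV[R]_d.
Notation vertex := (@simplex_vertex R d).
Notation S := (@simplex_S R d).

Lemma dotvBr (y a b : V) : dotv y (a - b) = dotv y a - dotv y b.
Proof. by rewrite /dotv -sumrB; apply: eq_bigr => i _; rewrite !mxE mulrBr. Qed.

Lemma dotvNl (y x : V) : dotv (- y) x = - dotv y x.
Proof. by rewrite /dotv -sumrN; apply: eq_bigr => i _; rewrite mxE mulNr. Qed.

Lemma dotv_deltal i (x : V) : dotv (delta_mx 0 i) x = x 0 i.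
Proof.
rewrite /dotv (bigD1 i) //= mxE !eqxx mul1r big1 ?addr0 // => k ki.
by rewrite mxE (negPf ki) andbF mul0r.
Qed.

Lemma dotv_vertex (y : V) j :
  dotv y (vertex j) = if unlift ord0 j is Some i then y 0 i else - \sum_i y 0 i.
Proof.
rewrite /dotv /simplex_vertex; case: unlift => [i|].
  rewrite (bigD1 i) //= mxE !eqxx mulr1 big1 ?addr0 // => k ki.
  by rewrite mxE (negPf ki) mulr0.
by rewrite -sumrN; apply: eq_bigr => i _; rewrite !mxE mulrN1.
Qed.

Lemma dotv_continuous (y : V) : continuous (dotv y).
Proof.
rewrite /dotv; apply: continuous_big => [|i _ x]; first exact: add_continuous.
by apply: continuousZ; [exact: cst_continuous | exact: coord_continuous].
Qed.

Lemma intv_delta i : intv (delta_mx 0 i : V).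
Proof. by move=> k; rewrite mxE natr_int. Qed.

Lemma delta_mx_neq0 i : (delta_mx 0 i : V) != 0.
Proof. by apply/eqP => /rowP/(_ i)/eqP; rewrite !mxE !eqxx oner_eq0. Qed.

Lemma width_dir_ge0 (K : set V) y : K !=set0 -> 0 <= width_dir K y.
Proof.
move=> [a Ka]; rewrite /width_dir; set E := [set _ | _ in _ & _ in _].
have E0 : E 0 by exists a => //; exists a => //; rewrite dotvBr subrr.
have [E_ub|E_unb] := pselect (has_ubound E).
  exact: sup_upper_bound (conj (ex_intro _ 0 E0) E_ub) _ E0.
by rewrite sup_out // => -[].
Qed.

Lemma lattice_width_le (K : set V) y :
  K !=set0 -> intv y -> y != 0 -> lattice_width K <= width_dir K y.
Proof.
move=> K_neq0 y_int y_neq0; apply: ge_inf; last by exists y.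
by exists 0 => _ [z _ <-]; exact: width_dir_ge0.
Qed.

Lemma width_dir_ge (K : set V) y a b M :
  K a -> K b -> (forall x, K x -> `|dotv y x| <= M) ->
  dotv y (a - b) <= width_dir K y.
Proof.
move=> Ka Kb y_bnd; apply: sup_upper_bound; last by exists a => //; exists b.
split; first by exists (dotv y (a - b)); exists a => //; exists b.
exists (M + M) => _ [a' Ka' [b' Kb' <-]]; rewrite dotvBr.
have := y_bnd _ Ka'; have := y_bnd _ Kb'.
by rewrite !ler_norml => /andP[? ?] /andP[? ?]; lra.
Qed.

Lemma width_dir_simplex_ge2 y : intv y -> y != 0 -> 2 <= width_dir S y.
Proof.
move=> y_int y_neq0; have [i yi0] := rV_neq0_entry y_neq0.
pose w j := dotv y (vertex j).
have w_int j : w j \is a Num.int.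
  rewrite /w dotv_vertex; case: unlift => [i'|]; first exact: y_int.
  by rewrite rpredN rpred_sum.
have w_sum0 : \sum_j w j = 0.
  rewrite big_ord_recl /w dotv_vertex unlift_none.
  rewrite [X in _ + X](eq_bigr (fun i => y 0 i)) ?addNr // => k _.
  by rewrite dotv_vertex liftK.
have wi0 : w (lift ord0 i) != 0 by rewrite /w dotv_vertex liftK.
have [j1 [j2 w12]] := int_sum0_spread w_int w_sum0 wi0.
apply: le_trans w12 _; rewrite /w -dotvBr.
apply: (width_dir_ge (M := \sum_i `|y 0 i|)); try exact: vertex_in_simplex.
move=> x Sx; rewrite /dotv (le_trans (ler_norm_sum _ _ _)) // ler_sum // => k _.
by rewrite normrM ler_piMr ?simplex_entry_bound.
Qed.

Lemma lattice_width_simplex_ge2 : 2 <= lattice_width S.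
Proof.
apply: lb_le_inf => [|_ [y [y_int y_neq0] <-]].
  pose y : V := delta_mx 0 (Ordinal d_gt0).
  exists (width_dir S y), y => //.
  by split; [exact: intv_delta | exact: delta_mx_neq0].
exact: width_dir_simplex_ge2.
Qed.

Lemma width_dir_lt2 (K : set V) y j j' :
  compact K -> K !=set0 -> K `<=` S -> ~ K (vertex j) ->
  (forall x, dotv y x = bary x j - bary x j') -> width_dir K y < 2.
Proof.
move=> K_cpt [a Ka] KS Kj y_edge.
have y_cont := continuous_subspaceT (A := K) (@dotv_continuous y).
have [c /set_mem Kc c_max] := compact_EVT_max (ex_intro _ a Ka) K_cpt y_cont.
have /simplexE bary_c_ge0 := KS _ Kc.
have bary_cj : bary c j < 1.
  rewrite lt_neqAle bary_le1 ?andbT; last exact: KS.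
  by apply/eqP => /(bary_eq1 (KS _ Kc)) cj; apply: Kj; rewrite -cj.
apply: (@le_lt_trans _ _ (dotv y c + 1)).
  apply: ge_sup.
    by exists 0, a => //; exists a => //; rewrite dotvBr subrr.
  move=> _ [a' Ka' [b Kb <-]]; rewrite dotvBr.
  have /simplexE bary_b_ge0 := KS _ Kb; have := bary_le1 j' (KS _ Kb).
  have := c_max _ (mem_set Ka'); have := bary_b_ge0 j; rewrite (y_edge b); lra.
by have := bary_c_ge0 j'; rewrite y_edge; lra.
Qed.

Lemma edge_functional j : exists (y : V) j',
  [/\ intv y, y != 0 & forall x, dotv y x = bary x j - bary x j'].
Proof.
case: (unliftP ord0 j) => [i ->|->].
  exists (delta_mx 0 i), ord0.
  split; [exact: intv_delta | exact: delta_mx_neq0 |].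
  by move=> x; rewrite dotv_deltal bary_liftB.
pose i0 := Ordinal d_gt0.
exists (- delta_mx 0 i0), (lift ord0 i0); split.
- by move=> k; rewrite mxE rpredN; exact: intv_delta.
- by rewrite oppr_eq0 delta_mx_neq0.
- by move=> x; rewrite dotvNl dotv_deltal -bary_liftB opprB.
Qed.

Lemma simplex_lattice_reduced : lattice_reduced S.
Proof.
move=> K [K_cvx [K_cpt [x /interior_subset Kx]]] [KS K_neqS] K_width.
have [j Kj] : exists j, ~ K (vertex j).
  apply: contrapT => K_vertices; apply: K_neqS; apply: conv_pts_sub => // j.
  by apply: contrapT => Kj; apply: K_vertices; exists j.
have [y [j' [y_int y_neq0 y_edge]]] := edge_functional j.
have := lattice_width_le (ex_intro _ x Kx) y_int y_neq0.
have := width_dir_lt2 K_cpt (ex_intro _ x Kx) KS Kj y_edge.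
have := lattice_width_simplex_ge2; rewrite -K_width; lra.
Qed.

End LatticeWidth.

(* The second case is the junk value [sup] takes on sets without upper bound. *)
Lemma lattice_diam_ge (R : realType) d (K : set 'rV[R]_d) a b t :
  K a -> K b -> lattice_seg_len a b t ->
  t <= lattice_diam K \/ lattice_diam K = 0.
Proof.
move=> Ka Kb ab_t; rewrite /lattice_diam; set E := [set t | _].
have Et : E t by exists a, b.
have [E_ub|E_unb] := pselect (has_ubound E).
  by left; exact: sup_upper_bound (conj (ex_intro _ t Et) E_ub) _ Et.
by right; rewrite sup_out // => -[].
Qed.

Section LatticeDiameter.
Variables (R : realType) (d : nat).
Hypothesis d_gt0 : (0 < d)%N.
Notation V := 'rV[R]_d.
Notation vertex := (@simplex_vertex R d).
Notation S := (@simplex_S R d).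

Lemma primitive_vertex j : primitive (vertex j).
Proof.
have [k vk] : exists k, vertex j 0 k = 1 \/ vertex j 0 k = -1.
  rewrite /simplex_vertex; case: (unliftP ord0 j) => [i _|_].
    by exists i; left; rewrite mxE !eqxx.
  by exists (Ordinal d_gt0); right; rewrite !mxE.
split; [|split].
- move=> i; rewrite /simplex_vertex; case: unlift => [i'|]; rewrite !mxE.
    exact: natr_int.
  by rewrite rpredN int_num1.
- apply/eqP => /rowP/(_ k); rewrite mxE.
  by case: vk => -> /eqP; rewrite ?oppr_eq0 oner_eq0.
- move=> s /(_ k); rewrite mxE.
  by case: vk => ->; rewrite ?mulr1 ?mulrN1 ?rpredN.
Qed.

Lemma lattice_seg_to_vertex c j :
  c <= 1 -> lattice_seg_len (c *: vertex j) (vertex j) (1 - c).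
Proof.
move=> c_le1; split; first by rewrite subr_ge0.
exists (vertex j); split; first exact: primitive_vertex.
by rewrite scalerBl scale1r.
Qed.

Lemma simplex_seg_bound (a b v : V) t :
  S a -> S b -> 0 <= t -> intv v -> v != 0 -> b - a = t *: v ->
  t * d%:R <= d.+1%:R.
Proof.
move=> /simplexE a_ge0 /simplexE b_ge0 t_ge0 v_int v_neq0 ba.
have [i vi_neq0] := rV_neq0_entry v_neq0.
apply: (@prob_shift_int_le _ _ _ _ (pad0 v) _ (lift ord0 i) ord0 a_ge0 b_ge0).
- exact: bary_sum.
- move=> j; rewrite /pad0; case: unlift => [?|]; first exact: v_int.
  exact: int_num0.
- by rewrite pad0_lift pad0_ord0.
- exact: t_ge0.
- move=> j; have -> : b = a + t *: v by rewrite -ba addrC subrK.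
  by rewrite bary_translate addrC addKr.
Qed.

Lemma lattice_diam_simplex : lattice_diam S = d.+1%:R / d%:R.
Proof.
have d_pos : 0 < d%:R :> R by rewrite ltr0n.
have dV_pos : 0 < d%:R^-1 :> R by rewrite invr_gt0.
rewrite /lattice_diam; set E := [set t | _].
have E_ub : ubound E (d.+1%:R / d%:R).
  move=> t [a [b [Sa [Sb [t_ge0 [v [[v_int [v_neq0 _]] ba]]]]]]].
  by rewrite ler_pdivlMr //; exact: simplex_seg_bound ba.
have E_diam : E (d.+1%:R / d%:R).
  pose c : R := - d%:R^-1.
  exists (c *: vertex ord0), (vertex ord0); split; last split.
  - apply/simplexE => k; rewrite bary_scale_vertex.
    case: eqP => _; last by rewrite mulr0 addr0 divr_ge0 // subr_ge0 /c; lra.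
    suff -> : (1 - c) / d.+1%:R + c * 1 = 0 by [].
    by rewrite /c -natr1; field; rewrite lt0r_neq0 // natr1 pnatr_eq0.
  - exact: vertex_in_simplex.
  - have -> : d.+1%:R / d%:R = 1 - c.
      by rewrite /c -natr1; field; rewrite lt0r_neq0.
    by apply: lattice_seg_to_vertex; rewrite /c; lra.
set D := d.+1%:R / d%:R in E_ub E_diam *.
apply/le_anti/andP; split; first by apply: ge_sup => //; exists D.
by apply: sup_upper_bound => //; split; exists D.
Qed.

Lemma convex_superset_axis_point (K : set V) p j :
  convex_set_ K -> S `<=` K -> K p -> bary p j < 0 ->
  exists2 c, c < - d%:R^-1 & K (c *: vertex j).
Proof.
move=> K_cvx SK Kp pj_lt0.
have d_pos : 0 < d%:R :> R by rewrite ltr0n.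
have dV_pos : 0 < d%:R^-1 :> R by rewrite invr_gt0.
have N_pos : 0 < d.+1%:R :> R by rewrite ltr0n.
have NV_pos : 0 < d.+1%:R^-1 :> R by rewrite invr_gt0.
have [l [l_gt0 l_lt1 l_small]] := exists_small_scale (bary p) NV_pos.
have lp_lt0 : l * bary p j < 0 by rewrite pmulr_rlt0.
set c := (l * bary p j - 1) / d%:R.
have c_lt : c < - d%:R^-1.
  by rewrite ltr_pdivrMr // mulNr mulVf ?lt0r_neq0 //; lra.
exists c => //.
have [s Ss ->] : exists2 s, S s & c *: vertex j = (1 - l) *: s + l *: p.
  apply: simplex_preimage; [exact: ltW | exact: l_lt1 |] => k.
  rewrite bary_scale_vertex; case: eqP => [->|_].
    have -> : (1 - c) / d.+1%:R + c * 1 = l * bary p j / d.+1%:R.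
      by rewrite /c -natr1; field; rewrite natr1 pnatr_eq0 lt0r_neq0.
    rewrite ler_pdivlMr //; have : 1 <= d.+1%:R :> R by rewrite ler1n.
    nra.
  rewrite mulr0 addr0 (le_trans (l_small k)) // -[leLHS]mul1r ler_wpM2r ?ltW //.
  lra.
by apply: K_cvx; [exact: SK | exact: Kp | exact: ltW | exact: ltW].
Qed.

Lemma simplex_lattice_complete : lattice_complete S.
Proof.
move=> K [K_cvx _] [SK K_neqS] K_diam.
have [p Kp Sp] : exists2 p, K p & ~ S p.
  apply: contrapT => K_in_S; apply: K_neqS => p Kp.
  by apply: contrapT => Sp; apply: K_in_S; exists p.
have [j pj_lt0] : exists j, bary p j < 0.
  apply: contrapT => bary_ge0; apply: Sp; apply/simplexE => j.
  by rewrite leNgt; apply/negP => pj_lt0; apply: bary_ge0; exists j.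
have [c c_lt K_c] := convex_superset_axis_point K_cvx SK Kp pj_lt0.
have dV_pos : 0 < d%:R^-1 :> R by rewrite invr_gt0 ltr0n.
have c_le1 : c <= 1 by lra.
have Sj := SK _ (vertex_in_simplex _ j).
have := lattice_diam_ge K_c Sj (lattice_seg_to_vertex j c_le1).
have -> : lattice_diam K = 1 + d%:R^-1.
  rewrite K_diam lattice_diam_simplex -natr1 mulrDl mulfV ?mul1r //.
  by rewrite lt0r_neq0 ?ltr0n.
by case=> ?; lra.
Qed.

End LatticeDiameter.

Theorem proposition3p12 (R : realType) (d : nat) :
  (0 < d)%N ->
  lattice_reduced (@simplex_S R d) /\ lattice_complete (@simplex_S R d).
Proof.
move=> d_gt0; split.
  exact: simplex_lattice_reduced d_gt0.
exact: simplex_lattice_complete d_gt0.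
Qed.
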